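(* Let $S$ be a $1$-synchronizable system. Let $\tau\in T_0(S)$ and $a,b_1,\dots,b_n\in\Sigma_M$ be such that $\tau\cdot !?a\in T_0(S)$, $\tau\cdot !?b_1\cdots !?b_n\in T_0(S)$, and $\mathrm{src}(a)\neq\mathrm{src}(b_i)$ for all $i\in\{1,\dots,n\}$. Then $\tau\cdot !?a\cdot !?b_1\cdots !?b_n\in T_0(S)$, $\tau\cdot !?b_1\cdots !?b_n\cdot !?a\in T_0(S)$, and $\tau\cdot !?a\cdot !?b_1\cdots !?b_n\equiv_S\tau\cdot !?b_1\cdots !?b_n\cdot !?a$.
   Context: A message set $M=(\Sigma_M,N,\mathrm{src},\mathrm{dst})$: finite set of messages, $N\ge1$ peers, $\mathrm{src}(a)\neq\mathrm{dst}(a)\in\{1,\dots,N\}$. Actions $!a$ (by peer $\mathrm{src}(a)$), $?a$ (by peer $\mathrm{dst}(a)$); traces are finite action sequences; $!?a$ abbreviates $!a\cdot?a$. For a trace $\tau$, $\pi_!(\tau)$ is the sequence of sent messages; $\mathrm{buf}_{i\to j}(\tau)$ is the word $w$ (if any) with (sent on $i\to j$) $=$ (received on $i\to j$)$\cdot w$. $\tau$ is FIFO ($k$-bounded FIFO) if for all $i,j$ and prefixes $\tau'$, $\mathrm{buf}_{i\to j}(\tau')$ is defined (and has length $\le k$); synchronous if of the form $!?a_1\cdots!?a_k$. A system $S=(P_1,\dots,P_N)$: finite automata $P_i$ (all states accepting) over actions of peer $i$, with one FIFO channel per ordered pair $i\neq j$. A configuration: one control state per peer and contents $w_{i,j}$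 of channels; stable if all channels empty. $!a$ ($\mathrm{src}(a)=i,\mathrm{dst}(a)=j$) moves $P_i$ and appends $a$ to $w_{i,j}$; $?a$ moves $P_j$ and removes $a$ from the head of $w_{i,j}$; $c_0$ is the initial configuration. $T_k(S)$ ($k\ge1$): $k$-bounded FIFO traces $\tau$ with $c_0\xrightarrow{\tau}c$ for some $c$; $T_0(S)$: synchronous such traces; $T_\omega(S)=\bigcup_kT_k(S)$. $\tau_1\equiv_S\tau_2$ iff $\tau_1,\tau_2\in T_\omega(S)$ and there is $c$ with $c_0\xrightarrow{\tau_1}c$ and $c_0\xrightarrow{\tau_2}c$. $ST_k(S)=\{\pi_!(\tau)\mid\tau\in T_k(S)\}\cup\{(\pi_!(\tau),c)\mid c_0\xrightarrow{\tau}c,\ c\text{ stable},\ \tau\in T_k(S)\}$; $S$ is $1$-synchronizable if $ST_0(S)=ST_1(S)$. *)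

From HB Require Import structures.
From mathcomp Require Import all_boot.
Set Implicit Arguments. Unset Strict Implicit. Unset Printing Implicit Defensive.

(* A message set M = (Sigma_M, N, src, dst); peers are 'I_N (0-indexed). *)
Record msgset := MsgSet {
  msg : finType;
  npeers : nat;
  npeers_pos : 0 < npeers;
  src : msg -> 'I_npeers;
  dst : msg -> 'I_npeers;
  src_neq_dst : forall a, src a != dst a }.

Section Defs.
Variable M : msgset.
Notation Msg := (msg M).
Notation peer := ('I_(npeers M)).

Inductive action := Send of Msg | Recv of Msg.

Definition actor (x : action) : peer :=
  match x with Send a => src a | Recv a => dst a end.

Definition trace := seq action.

(* !?a = !a . ?a, and !?a_1 ... !?a_k *)
Definition sync (s : seq Msg) : trace := flatten [seq [:: Send a; Recv a] | a <- s].

Definition sent_of (x : action) : option Msg := if x is Send a then Some a else None.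
Definition recv_of (x : action) : option Msg := if x is Recv a then Some a else None.

Definition pi_send (t : trace) : seq Msg := pmap sent_of t.

Definition on_chan (i j : peer) (a : Msg) := (src a == i) && (dst a == j).
Definition sent_on i j (t : trace) := filter (on_chan i j) (pmap sent_of t).
Definition recv_on i j (t : trace) := filter (on_chan i j) (pmap recv_of t).

Definition buf_defined i j (t : trace) := prefix (recv_on i j t) (sent_on i j t).
Definition buf_size i j (t : trace) := size (sent_on i j t) - size (recv_on i j t).

Definition fifo (t : trace) :=
  forall n, n <= size t -> forall i j, buf_defined i j (take n t).
Definition kfifo (k : nat) (t : trace) :=
  forall n, n <= size t -> forall i j,
    buf_defined i j (take n t) /\ buf_size i j (take n t) <= k.
Definition synchronous (t : trace) := exists s, t = sync s.

(* A system: one finite automaton per peer (all states accepting), whose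
   transitions are labelled by actions of that peer. *)
Record system := System {
  St : peer -> finType;
  init : forall i, St i;
  trans : forall i, St i -> action -> St i -> bool;
  trans_local : forall (i : peer) (q : St i) x q', trans q x q' -> actor x = i }.

Variable S : system.

Record config := Config {
  cstate : forall i, St S i;
  chan : peer -> peer -> seq Msg }.

Definition c0 : config := Config (init S) (fun _ _ => [::]).

Definition stable (c : config) := forall i j, chan c i j = [::].

Definition step (c : config) (x : action) (c' : config) : Prop :=
  let p := actor x in
  trans (cstate c p) x (cstate c' p) /\
  (forall k, k != p -> cstate c' k = cstate c k) /\
  match x with
  | Send a => chan c' (src a) (dst a) = rcons (chan c (src a) (dst a)) a /\
      (forall i j, (i, j) != (src a, dst a) -> chan c' i j = chan c i j)
  | Recv a => chan c (src a) (dst a) = a :: chan c' (src a) (dst a) /\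
      (forall i j, (i, j) != (src a, dst a) -> chan c' i j = chan c i j)
  end.

Inductive reach : config -> trace -> config -> Prop :=
  | reach_nil c : reach c [::] c
  | reach_cons c x c' t c'' : step c x c' -> reach c' t c'' -> reach c (x :: t) c''.

Definition inT (k : nat) (t : trace) : Prop :=
  (if k is 0 then synchronous t else kfifo k t) /\ exists c, reach c0 t c.

Definition inTomega (t : trace) : Prop := exists k, 0 < k /\ inT k t.

Definition equivS (t1 t2 : trace) : Prop :=
  inTomega t1 /\ inTomega t2 /\ exists c, reach c0 t1 c /\ reach c0 t2 c.

Definition ST (k : nat) (X : seq Msg + (seq Msg * config)) : Prop :=
  (exists t, inT k t /\ X = inl (pi_send t)) \/
  (exists t c, inT k t /\ reach c0 t c /\ stable c /\ X = inr (pi_send t, c)).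

Definition synchronizable1 : Prop := forall X, ST 0 X <-> ST 1 X.

End Defs.

Arguments Send {M}.
Arguments Recv {M}.

(** A configuration is reached exactly when every peer can run its projection of the
    trace and the channels behave as FIFO queues, so an execution of a trace [u] can be
    assembled peer by peer from executions of other traces with the same projections.
    When [u] is a 1-bounded FIFO trace, 1-synchronizability then yields the synchronous
    trace with the same sends, and, if the channels of [u] end empty, one that reaches
    the very same configuration.
    Because [a] and the [b_i] have different senders, we can delay [?a] to the end and
    move [!a] past the [b_i]: the sender of [a] cannot tell, and the other peers behave
    as in the other order.  This gives both interleavings; as the automata are
    nondeterministic, a common final configuration is built explicitly: the stable
    configuration of [tau !a b_1 ... b_n ?a], reached by [tau a b_1 ... b_n], takes the
    state of the receiver of [a] from an execution of [tau b_1 ... b_n a], and moving [a]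
    rightwards one message at a time shows that its sender's state is also reached
    along [tau b_1 ... b_n a]. *)

From mathcomp Require Import all_boot.
From Stdlib Require Import FunctionalExtensionality.

Set Implicit Arguments. Unset Strict Implicit. Unset Printing Implicit Defensive.

Section Executions.
Variables (M : msgset) (S : system M).
Notation Msg := (msg M).
Notation peer := ('I_(npeers M)).

Lemma sync_cat (s1 s2 : seq Msg) : sync (s1 ++ s2) = sync s1 ++ sync s2.
Proof. by rewrite /sync map_cat flatten_cat. Qed.

Lemma sync_cons (a : Msg) s : sync (a :: s) = [:: Send a] ++ [:: Recv a] ++ sync s.
Proof. by []. Qed.

Lemma pi_send_cat (t1 t2 : trace M) : pi_send (t1 ++ t2) = pi_send t1 ++ pi_send t2.
Proof. exact: pmap_cat. Qed.

Lemma pi_send_sync (s : seq Msg) : pi_send (sync s) = s.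
Proof. by elim: s => //= a s ->. Qed.

Lemma dst_src_eqF (a : Msg) : (dst a == src a) = false.
Proof. by rewrite eq_sym; apply/negbTE/src_neq_dst. Qed.

Definition proj (i : peer) (t : trace M) : trace M := [seq x <- t | actor x == i].

Lemma proj_cat i (t1 t2 : trace M) : proj i (t1 ++ t2) = proj i t1 ++ proj i t2.
Proof. exact: filter_cat. Qed.

Lemma proj_send i (a : Msg) : proj i [:: Send a] = if src a == i then [:: Send a] else [::].
Proof. by []. Qed.

Lemma proj_recv i (a : Msg) : proj i [:: Recv a] = if dst a == i then [:: Recv a] else [::].
Proof. by []. Qed.

Fixpoint local_run (i : peer) (q : St S i) (w : trace M) (q' : St S i) : Prop :=
  if w is x :: w' then exists2 q1, trans q x q1 & local_run q1 w' q' else q = q'.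

Lemma reach_local_run i (c c' : config S) t :
  reach c t c' -> local_run (cstate c i) (proj i t) (cstate c' i).
Proof.
elim=> {c t c'} [//|c x c1 t c' [trans_x [frame_x _]] _ IH].
rewrite /proj /=; case: eqP IH => [<-|/eqP ne] IH; first by exists (cstate c1 (actor x)).
by rewrite -(frame_x i) // eq_sym.
Qed.

Lemma reach_catl (c c2 : config S) (t1 t2 : trace M) :
  reach c (t1 ++ t2) c2 -> exists c1, reach c t1 c1.
Proof.
move E : (t1 ++ t2) => t run; elim: run t1 E => {c t c2} [c|c x c' t c2 step_x _ IH] [|y t1] //=;
  try by exists c; exact: reach_nil.
case=> -> /IH [c1 reach_t1]; exists c1; exact: reach_cons step_x reach_t1.
Qed.

Definition reachable (t : trace M) := exists c, reach (c0 S) t c.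

Lemma reachable_catl (t1 t2 : trace M) : reachable (t1 ++ t2) -> reachable t1.
Proof. by case=> c /reach_catl. Qed.

Lemma on_chanE (i j : peer) (a : Msg) : on_chan i j a = ((i, j) == (src a, dst a)).
Proof. by rewrite /on_chan xpair_eqE eq_sym [dst a == j]eq_sym. Qed.

Lemma on_chan_self (a : Msg) : on_chan (src a) (dst a) a.
Proof. by rewrite on_chanE. Qed.

Lemma on_chan_srcF (a b : Msg) : src a != src b -> on_chan (src b) (dst b) a = false.
Proof. by rewrite on_chanE xpair_eqE eq_sym => /negbTE ->. Qed.

Definition chans_of (P : seq Msg) (i j : peer) : seq Msg := [seq m <- P | on_chan i j m].

Lemma chans_of_cons (P : seq Msg) a i j :
  chans_of (a :: P) i j = if on_chan i j a then a :: chans_of P i j else chans_of P i j.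
Proof. by []. Qed.

Lemma chans_of_rem (P : seq Msg) a i j :
  chans_of (rem a P) i j = if on_chan i j a then rem a (chans_of P i j) else chans_of P i j.
Proof.
elim: P => [|m P IH]; first by case: ifP.
rewrite rem_cons !chans_of_cons; case: (eqVneq m a) => [->|ne].
  by case: (on_chan i j a) => //; rewrite rem_cons eqxx.
rewrite chans_of_cons IH.
by case: (on_chan i j m); case: (on_chan i j a) => //; rewrite rem_cons (negbTE ne).
Qed.

(** Channel evolution along a trace in which every channel holds at most one message:
    [P] lists the messages in transit, and a send requires its channel to be empty. *)
Inductive run1 : seq Msg -> trace M -> seq Msg -> Prop :=
  | run1_nil P : run1 P [::] P
  | run1_send P a t P' : chans_of P (src a) (dst a) = [::] ->
      run1 (a :: P) t P' -> run1 P (Send a :: t) P'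
  | run1_recv P a t P' : chans_of P (src a) (dst a) = [:: a] ->
      run1 (rem a P) t P' -> run1 P (Recv a :: t) P'.

Lemma run1_cat P1 P2 P3 t1 t2 : run1 P1 t1 P2 -> run1 P2 t2 P3 -> run1 P1 (t1 ++ t2) P3.
Proof.
elim=> {P1 t1 P2} [//|P a t P' free _ IH|P a t P' head _ IH] /IH.
  exact: run1_send.
exact: run1_recv.
Qed.

Lemma run1_sync P (s : seq Msg) :
  {in s, forall b, chans_of P (src b) (dst b) = [::]} -> run1 P (sync s) P.
Proof.
elim: s => [|b s IH] free_s; first exact: run1_nil.
apply: run1_send; first by apply: free_s; rewrite mem_head.
apply: run1_recv; first by rewrite chans_of_cons on_chan_self free_s ?mem_head.
rewrite /= eqxx; apply: IH => c cs; apply: free_s; by rewrite inE cs orbT.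
Qed.

Lemma run1_take P t P' n : run1 P t P' -> exists Pn, run1 P (take n t) Pn.
Proof.
move=> run; elim: run n => {P t P'} [P|P a t P' free _ IH|P a t P' head _ IH] [|n] /=;
  try by eexists; exact: run1_nil.
  by have [Pn run_n] := IH n; exists Pn; exact: run1_send.
by have [Pn run_n] := IH n; exists Pn; exact: run1_recv.
Qed.

Lemma run1_chans P t P' i j : run1 P t P' ->
  chans_of P i j ++ sent_on i j t = recv_on i j t ++ chans_of P' i j.
Proof.
elim=> {P t P'} [P|P a t P' free _ IH|P a t P' head _ IH]; first by rewrite cats0.
  move: IH; rewrite /sent_on /recv_on /=.
  by case: ifP => [|_ //]; rewrite on_chanE => /eqP [-> ->]; rewrite free.
move: IH; rewrite /sent_on /recv_on /= chans_of_rem.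
case: ifP => [|_ //]; rewrite on_chanE => /eqP [-> ->].
by rewrite head /= eqxx => <-.
Qed.

Lemma run1_bounded P t P' : run1 P t P' ->
  (forall i j, size (chans_of P i j) <= 1) -> forall i j, size (chans_of P' i j) <= 1.
Proof.
elim=> {P t P'} [//|P a t P' free _ IH|P a t P' head _ IH] bounded; apply: IH => i j.
  rewrite chans_of_cons; case: ifP => [|_]; last exact: bounded.
  by rewrite on_chanE => /eqP [-> ->]; rewrite free.
rewrite chans_of_rem; case: ifP => _; last exact: bounded.
exact: leq_trans (size_subseq (rem_subseq _ _)) (bounded i j).
Qed.

Lemma run1_kfifo t P : run1 [::] t P -> kfifo 1 t.
Proof.
move=> run n _ i j; have [Pn run_n] := run1_take n run.
have := run1_chans i j run_n; rewrite /buf_defined /buf_size /= => ->.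
rewrite prefix_prefix size_cat addKn; split=> //.
exact: run1_bounded run_n _ i j.
Qed.

Lemma local_runs_cons x t (s f : forall i, St S i) :
  (forall i, local_run (s i) (proj i (x :: t)) (f i)) ->
  exists2 s' : forall i, St S i,
    trans (s (actor x)) x (s' (actor x)) /\ (forall k, k != actor x -> s' k = s k)
    & forall i, local_run (s' i) (proj i t) (f i).
Proof.
move=> runs; have := runs (actor x); rewrite /proj /= eqxx => -[q trans_q run_q].
exists (dfwith s q); first by rewrite dfwith_in; split=> // k ne; rewrite dfwith_out // eq_sym.
move=> i; case: dfwithP => [//|k ne].
by have := runs k; rewrite /proj /= (negbTE ne).
Qed.

Lemma reach_of_local_runs P u P' (s f : forall i, St S i) : run1 P u P' ->
  (forall i, local_run (s i) (proj i u) (f i)) ->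
  reach (Config s (chans_of P)) u (Config f (chans_of P')).
Proof.
move=> run; elim: run s => {P u P'} [P|P a t P' free _ IH|P a t P' head _ IH] s runs.
- have -> : s = f by apply: functional_extensionality_dep => i; exact: runs i.
  exact: reach_nil.
- have [s' [trans_a frame_a] runs'] := local_runs_cons runs.
  apply: reach_cons (IH _ runs'); do 2!split=> //=.
  split=> [|i j]; first by rewrite on_chan_self free.
  by rewrite -on_chanE => /negbTE ->.
- have [s' [trans_a frame_a] runs'] := local_runs_cons runs.
  apply: reach_cons (IH _ runs'); do 2!split=> //=.
  split=> [|i j]; first by rewrite chans_of_rem on_chan_self head /= eqxx.
  by rewrite chans_of_rem -on_chanE => /negbTE ->.
Qed.

Lemma inT0_sync s : reachable (sync s) -> inT S 0 (sync s).
Proof. by split; first exists s. Qed.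

Lemma inTomega_sync s : reachable (sync s) -> inTomega S (sync s).
Proof. by exists 1; split=> //; split; first exact: run1_kfifo (run1_sync _). Qed.

Definition mix (k : peer) (c1 c2 : config S) (i : peer) : St S i :=
  if i == k then cstate c1 i else cstate c2 i.

Lemma local_runs_mix u k t1 t2 (c1 c2 : config S) :
  reach (c0 S) t1 c1 -> reach (c0 S) t2 c2 ->
  proj k u = proj k t1 -> (forall i, i != k -> proj i u = proj i t2) ->
  forall i, local_run (init S i) (proj i u) (mix k c1 c2 i).
Proof.
move=> reach1 reach2 proj1 proj2 i; rewrite /mix; case: eqP => [->|/eqP ne].
  by rewrite proj1; exact (reach_local_run k reach1).
by rewrite proj2 //; exact (reach_local_run i reach2).
Qed.

Hypothesis sync1 : synchronizable1 S.

Lemma reachable_sync_of_inT1 u : inT S 1 u -> reachable (sync (pi_send u)).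
Proof.
move=> u1; have : ST (S := S) 0 (inl (pi_send u)) by apply/sync1; left; exists u.
case=> [[_ [[[s ->] reach_s] [->]]] | [? [? [_ [_ [_ //]]]]]].
by rewrite pi_send_sync.
Qed.

Lemma reach_sync_of_inT1 u c : inT S 1 u -> reach (c0 S) u c -> stable c ->
  reach (c0 S) (sync (pi_send u)) c.
Proof.
move=> u1 reach_u stable_c.
have : ST (S := S) 0 (inr (pi_send u, c)) by apply/sync1; right; exists u, c.
case=> [[? [_ //]] | [_ [c' [[[s ->] _] [reach_s [_ [-> ->]]]]]]].
by rewrite pi_send_sync.
Qed.

Lemma reachable_sync_of_local_runs u P (f : forall i, St S i) : run1 [::] u P ->
  (forall i, local_run (init S i) (proj i u) (f i)) -> reachable (sync (pi_send u)).
Proof.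
move=> run runs; apply: reachable_sync_of_inT1; split; first exact: run1_kfifo run.
by exists (Config f (chans_of P)); exact: reach_of_local_runs run runs.
Qed.

Lemma reach_sync_of_local_runs u (f : forall i, St S i) : run1 [::] u [::] ->
  (forall i, local_run (init S i) (proj i u) (f i)) ->
  reach (c0 S) (sync (pi_send u)) (Config f (chan (c0 S))).
Proof.
move=> run runs; have reach_u := reach_of_local_runs run runs.
have u1 : inT S 1 u by split; [exact: run1_kfifo run | exists (Config f (chans_of [::]))].
exact: reach_sync_of_inT1 u1 reach_u _.
Qed.

Lemma reachable_sync_merge p x q y : src x != src y -> {in q, forall b, src x != src b} ->
  reachable (sync (p ++ x :: q)) -> reachable (sync (p ++ q ++ [:: y])) ->
  reachable (sync (p ++ x :: q ++ [:: y])).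
Proof.
move=> xy xq [cx reach_x] reach_pqy.
have /reachable_catl [cy reach_y] : reachable ((sync (p ++ q) ++ [:: Send y]) ++ [:: Recv y]).
  by move: reach_pqy; rewrite catA sync_cat -catA.
set u := sync p ++ [:: Send x] ++ sync q ++ [:: Send y].
have run : run1 [::] u [:: y; x].
  apply: run1_cat (run1_sync _) _ => //; apply: run1_send => //.
  apply: run1_cat (run1_sync _) _ => [b /xq xb|]; first by rewrite /= on_chan_srcF.
  by apply: run1_send; [rewrite /= on_chan_srcF | exact: run1_nil].
have := reachable_sync_of_local_runs run (local_runs_mix (k := src x) reach_x reach_y _ _).
rewrite !pi_send_cat !pi_send_sync /=; apply.
  rewrite /u !sync_cat sync_cons !proj_cat !proj_send !proj_recv.
  by rewrite eqxx dst_src_eqF [src y == _]eq_sym (negbTE xy) cats0.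
move=> i ne; rewrite /u !sync_cat -!catA !proj_cat !proj_send.
by rewrite eq_sym (negbTE ne).
Qed.

Lemma reachable_sync_insert_first w a s : {in s, forall b, src a != src b} ->
  reachable (sync (w ++ [:: a])) -> reachable (sync (w ++ s)) ->
  reachable (sync (w ++ a :: s)).
Proof.
elim/last_ind: s => [//|s b IH] sa reach_a; rewrite -cats1 => reach_sb.
have sa' : {in s, forall c, src a != src c}.
  by move=> c cs; apply: sa; rewrite mem_rcons inE cs orbT.
apply: reachable_sync_merge; first by rewrite sa // mem_rcons mem_head.
- exact: sa'.
- apply: IH sa' reach_a _; apply: (@reachable_catl _ (sync [:: b])).
  by rewrite -sync_cat -catA.
- exact: reach_sb.
Qed.

Lemma reachable_sync_insert_last w a s : {in s, forall b, src a != src b} ->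
  reachable (sync (w ++ [:: a])) -> reachable (sync (w ++ s)) ->
  reachable (sync (w ++ s ++ [:: a])).
Proof.
elim/last_ind: s => [//|s b IH] sa reach_a; rewrite -cats1 => reach_sb.
have sa' : {in s, forall c, src a != src c}.
  by move=> c cs; apply: sa; rewrite mem_rcons inE cs orbT.
rewrite -catA (catA w) cat1s; apply: (reachable_sync_merge (q := [::])) => //.
- by rewrite eq_sym sa // mem_rcons mem_head.
- by rewrite -catA.
- rewrite /= -catA; apply: IH sa' reach_a _; apply: (@reachable_catl _ (sync [:: b])).
  by rewrite -sync_cat -catA.
Qed.

Lemma reach_sync_first_mix w a s (c1 c2 : config S) : {in s, forall b, src a != src b} ->
  reach (c0 S) (sync (w ++ a :: s)) c1 -> reach (c0 S) (sync (w ++ s ++ [:: a])) c2 ->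
  reach (c0 S) (sync (w ++ a :: s)) (Config (mix (dst a) c2 c1) (chan (c0 S))).
Proof.
move=> sa reach1 reach2.
set u := sync w ++ [:: Send a] ++ sync s ++ [:: Recv a].
have run : run1 [::] u [::].
  apply: run1_cat (run1_sync _) _ => //; apply: run1_send => //.
  apply: run1_cat (run1_sync _) _ => [b /sa ab|]; first by rewrite /= on_chan_srcF.
  by apply: run1_recv; [rewrite /= on_chan_self | rewrite /= eqxx; exact: run1_nil].
have := reach_sync_of_local_runs run (local_runs_mix (k := dst a) reach2 reach1 _ _).
rewrite !pi_send_cat !pi_send_sync /= cats0; apply.
  rewrite /u !sync_cat sync_cons !proj_cat !proj_send !proj_recv.
  by rewrite eqxx (negbTE (src_neq_dst a)).
move=> i ne; rewrite /u !sync_cat sync_cons !proj_cat !proj_send !proj_recv.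
by rewrite [dst a == _]eq_sym (negbTE ne) cats0.
Qed.

Lemma reach_sync_swap_mix p a b r (c1 c2 : config S) :
  src a != src b -> {in r, forall c, src a != src c} ->
  reach (c0 S) (sync (p ++ a :: b :: r)) c1 -> reach (c0 S) (sync (p ++ b :: r ++ [:: a])) c2 ->
  reach (c0 S) (sync (p ++ b :: a :: r)) (Config (mix (src a) c1 c2) (chan (c0 S))).
Proof.
move=> ab ar reach1 reach2.
have ba : src b != src a by rewrite eq_sym.
set u := sync p ++ [:: Send b] ++ [:: Send a] ++ [:: Recv b] ++ sync r ++ [:: Recv a].
have run : run1 [::] u [::].
  apply: run1_cat (run1_sync _) _ => //; apply: run1_send => //.
  apply: run1_send; first by rewrite /= on_chan_srcF.
  apply: run1_recv; first by rewrite /= on_chan_srcF // on_chan_self.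
  have /negbTE a_neq_b : a != b by apply: contraNneq ab => ->.
  rewrite !rem_cons a_neq_b eqxx.
  apply: run1_cat (run1_sync _) _ => [c /ar ac|]; first by rewrite /= on_chan_srcF.
  by apply: run1_recv; [rewrite /= on_chan_self | rewrite /= eqxx; exact: run1_nil].
have := reach_sync_of_local_runs run (local_runs_mix (k := src a) reach1 reach2 _ _).
rewrite !pi_send_cat !pi_send_sync /= cats0; apply.
  rewrite /u !sync_cat !sync_cons !proj_cat !proj_send !proj_recv.
  by rewrite eqxx dst_src_eqF (negbTE ba) cats0.
move=> i ne; rewrite /u !(sync_cat, sync_cons) !proj_cat !proj_send !proj_recv.
by rewrite [src a == _]eq_sym (negbTE ne).
Qed.

Lemma reach_sync_move_last w a s (c1 c2 : config S) : {in s, forall b, src a != src b} ->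
  reach (c0 S) (sync (w ++ a :: s)) c1 -> reach (c0 S) (sync (w ++ s ++ [:: a])) c2 ->
  exists2 c, reach (c0 S) (sync (w ++ s ++ [:: a])) c & cstate c (src a) = cstate c1 (src a).
Proof.
elim: s w c1 => [|b s IH] w c1 sa reach1 reach2; first by exists c1.
have sa' : {in s, forall c, src a != src c} by move=> c cs; rewrite sa // inE cs orbT.
have := reach_sync_swap_mix (sa b (mem_head b s)) sa' reach1 reach2.
rewrite -cat1s catA => /(IH _ _ sa') /(_ _) [|c reach_c e]; first by rewrite -catA.
by exists c; [move: reach_c; rewrite -catA | rewrite e /mix /= eqxx].
Qed.

Lemma reach_sync_diamond w a s : {in s, forall b, src a != src b} ->
  reachable (sync (w ++ [:: a])) -> reachable (sync (w ++ s)) ->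
  exists c, reach (c0 S) (sync (w ++ a :: s)) c /\ reach (c0 S) (sync (w ++ s ++ [:: a])) c.
Proof.
move=> sa reach_a reach_s.
have [c1 reach1] := reachable_sync_insert_first sa reach_a reach_s.
have [c2 reach2] := reachable_sync_insert_last sa reach_a reach_s.
have reach_q := reach_sync_first_mix sa reach1 reach2.
have [c reach_c same_src] := reach_sync_move_last sa reach_q reach2.
exists (Config (mix (dst a) c2 c1) (chan (c0 S))); split=> //.
apply: (reach_of_local_runs (P := [::]) (P' := [::]) (s := init S) (run1_sync _)) => // i.
case: (eqVneq i (src a)) => [->|ne_src].
  have -> : mix (dst a) c2 c1 (src a) = cstate c (src a) := esym same_src.
  exact (reach_local_run _ reach_c).
rewrite /mix; case: eqP => [->|/eqP ne_dst]; first exact (reach_local_run _ reach2).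
have := reach_local_run i reach_q; rewrite /= /mix (negbTE ne_dst).
rewrite !(sync_cat, sync_cons) !proj_cat !proj_send !proj_recv.
by rewrite [src a == _]eq_sym (negbTE ne_src) [dst a == _]eq_sym (negbTE ne_dst) !cats0.
Qed.

End Executions.

Theorem lemma4p5 (M : msgset) (S : system M) (tau : trace M) (a : msg M) (bs : seq (msg M)) :
  synchronizable1 S ->
  inT S 0 tau ->
  inT S 0 (tau ++ sync [:: a]) ->
  inT S 0 (tau ++ sync bs) ->
  (forall b, b \in bs -> src a != src b) ->
  [/\ inT S 0 (tau ++ sync [:: a] ++ sync bs),
      inT S 0 (tau ++ sync bs ++ sync [:: a])
    & equivS S (tau ++ sync [:: a] ++ sync bs) (tau ++ sync bs ++ sync [:: a])].
Proof.
move=> sync1 [[w ->] _] [_ reach_a] [_ reach_s] sa.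
rewrite -!sync_cat in reach_a reach_s *.
have [c [reach1 reach2]] := reach_sync_diamond sync1 sa reach_a reach_s.
have reachable1 : reachable S (sync (w ++ [:: a] ++ bs)) by exists c.
have reachable2 : reachable S (sync (w ++ bs ++ [:: a])) by exists c.
split; [exact: inT0_sync reachable1 | exact: inT0_sync reachable2 |].
by split; [exact: inTomega_sync reachable1 | split; [exact: inTomega_sync reachable2 | exists c]].
Qed.
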